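(* Let $M$ be a JBW$^*$-triple and $T:M\to M$ a bounded linear map which is triple derivable at orthogonal pairs. For each tripotent $e\in M$ put $\xi_e:=\tfrac12\big(P_2(e)T(e)+Q(e)T(e)\big)\in M_2(e)$. Let $e_1,\dots,e_{m_1}$ and $v_1,\dots,v_{m_2}$ be two families of mutually orthogonal tripotents in $M$ and $\lambda_j,\mu_k>0$ with $\sum_{j=1}^{m_1}\lambda_je_j=\sum_{k=1}^{m_2}\mu_kv_k$. Then $\sum_{j=1}^{m_1}\lambda_j\xi_{e_j}=\sum_{k=1}^{m_2}\mu_k\xi_{v_k}$.
   Context: A JB$^*$-triple is a complex Banach space with a continuous triple product $\{\cdot,\cdot,\cdot\}$, bilinear and symmetric in the outer variables and conjugate-linear in the middle one, satisfying the Jordan identity $L(a,b)L(x,y)=L(x,y)L(a,b)+L(L(a,b)x,y)-L(x,L(b,a)y)$, with $L(a,a)$ hermitian of non-negative spectrum and $\|\{a,a,a\}\|=\|a\|^3$, where $L(a,b)x=\{a,b,x\}$; a JBW$^*$-triple is a JB$^*$-triple that is a dual Banach space. Elements $a,b$ are orthogonal ($a\perp b$) if $L(a,b)=0$. A linear map $T$ is triple derivable at orthogonal pairs if $\{T(a),b,c\}+\{a,T(b),c\}+\{a,b,T(c)\}=0$ for all $a,b,c$ with $a\perp b$. A tripotent is $e$ with $\{e,e,e\}=e$; $M_2(e)=\{x:\{e,e,x\}=x\}$, $P_2(e)$ is the Peirce-2 projection, $Q(e)x=\{e,x,e\}$. (By the paper's results, $\xi_e$ is the unique self-adjoint central element of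 the JB$^*$-algebra $M_2(e)$, with product $x\circ_e y=\{x,e,y\}$ and involution $x^{*_e}=\{e,x,e\}$, such that $P_2(e)T(a)-\xi_e\circ_e a$ is a triple derivation of $M_2(e)$.) *)

From mathcomp Require Import all_boot all_order all_algebra.
From mathcomp Require Import all_classical all_reals all_analysis.
From mathcomp.real_closed Require Export complex.
Import Order.TTheory GRing.Theory Num.Theory.
Import numFieldNormedType.Exports.
Local Open Scope ring_scope.

Set Implicit Arguments.
Unset Strict Implicit.
Unset Printing Implicit Defensive.

Section JBTriples.
Variable R : realType.
Local Notation C := R[i].
Variable X : completeNormedModType C.

Definition bounded_op (S : X -> X) : Prop := linear S /\ continuous S.

Definition invertible_op (S : X -> X) : Prop :=
  exists U : X -> X, bounded_op U /\ cancel S U /\ cancel U S.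

Definition spectrum (S : X -> X) (lam : C) : Prop :=
  ~ invertible_op (fun x => S x - lam *: x).

Definition state_pair (x : X) (phi : X -> C) : Prop :=
  [/\ linear phi, continuous (phi : X -> C^o), `|x| = 1,
      (forall y, `|phi y| <= `|y|) & phi x = 1].

(* (spatial) numerical range and hermitian operators (Vidav-Lumer) *)
Definition numerical_range (S : X -> X) (z : C) : Prop :=
  exists x phi, state_pair x phi /\ z = phi (S x).

Definition hermitian (S : X -> X) : Prop :=
  bounded_op S /\ forall z, numerical_range S z -> z \is Num.real.

(* X is (isometrically isomorphic to) the dual of some complex Banach
   space Y, via J : X -> Y^* *)
Definition is_dual_Banach_space : Prop :=
  exists (Y : completeNormedModType C) (J : X -> Y -> C),
    [/\ (forall x, linear (J x) /\ continuous (J x : Y -> C^o)),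
        (forall (a : C) x x' y, J (a *: x + x') y = a * J x y + J x' y),
        (forall f : Y -> C, linear f -> continuous (f : Y -> C^o) -> exists x, J x = f),
        (forall x y, `|J x y| <= `|x| * `|y|) &
        (forall x (eps : C), 0 < eps ->
           exists y : Y, `|y| <= 1 /\ `|x| - eps < `|J x y|)].

Definition Lop (tp : X -> X -> X -> X) (a b : X) : X -> X := tp a b.

Definition is_JB_triple (tp : X -> X -> X -> X) : Prop :=
  [/\
      (forall (s : C) x x' y z, tp (s *: x + x') y z = s *: tp x y z + tp x' y z),
      (forall x y z, tp x y z = tp z y x),
      (forall (s : C) x y y' z, tp x (s *: y + y') z = s^* *: tp x y z + tp x y' z),
      continuous (fun p : X * X * X => tp p.1.1 p.1.2 p.2) &
    [/\
      (forall a b x y w,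
         Lop tp a b (Lop tp x y w) =
           Lop tp x y (Lop tp a b w) + Lop tp (Lop tp a b x) y w
           - Lop tp x (Lop tp b a y) w),
      (forall a, hermitian (Lop tp a a)),
      (forall a (lam : C), spectrum (Lop tp a a) lam -> 0 <= lam) &
      (forall a, `|tp a a a| = `|a| ^+ 3)]].

Definition is_JBW_triple (tp : X -> X -> X -> X) : Prop :=
  is_JB_triple tp /\ is_dual_Banach_space.

Definition triple_orth (tp : X -> X -> X -> X) (a b : X) : Prop :=
  forall x, tp a b x = 0.

Definition triple_derivable_at_orth (tp : X -> X -> X -> X) (T : X -> X) : Prop :=
  forall a b c, triple_orth tp a b ->
    tp (T a) b c + tp a (T b) c + tp a b (T c) = 0.

Definition tripotent (tp : X -> X -> X -> X) (e : X) : Prop := tp e e e = e.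

Definition Qop (tp : X -> X -> X -> X) (e : X) (x : X) : X := tp e x e.

(* Peirce-2 projection P_2(e) = Q(e)^2 *)
Definition P2 (tp : X -> X -> X -> X) (e : X) (x : X) : X :=
  Qop tp e (Qop tp e x).

Definition xi (tp : X -> X -> X -> X) (T : X -> X) (e : X) : X :=
  (2 : C)^-1 *: (P2 tp e (T e) + Qop tp e (T e)).

End JBTriples.

From mathcomp Require Import all_boot all_order all_algebra.
From mathcomp Require Import all_classical all_reals all_analysis.
From mathcomp.real_closed Require Import complex.
Import Order.TTheory GRing.Theory Num.Theory.
Import numFieldNormedType.Exports.
Local Open Scope ring_scope.
Set Implicit Arguments.
Unset Strict Implicit.

(* The proof only uses the
   algebraic axioms of the triple product (trilinearity, symmetry, Jordan
   identity) and the additivity of T, and has two independent parts.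
   (1) Additivity of xi.  If e and f are orthogonal tripotents, the Peirce
       relations between e and f together with the derivation identity at the
       orthogonal pairs (e,f) and (f,e) give xi(e + f) = xi(e) + xi(f); by
       induction xi is additive on any family of mutually orthogonal
       tripotents, whose sum is again a tripotent.
   (2) Uniqueness of spectral components.  L(a,a) acts on e_j as lam_j^2 and
       on v_k as mu_k^2; applying to both decompositions of a the Lagrange
       interpolation polynomial in L(a,a) which selects the eigenvalue s^2,
       we get \sum_(lam_j = s) e_j = \sum_(mu_k = s) v_k for every s.
   The theorem follows by grouping both sums by coefficient value and applying
   (1) to each group, whose sums agree by (2). *)

Section TripleProduct.
Variables (R : realType) (M : completeNormedModType R[i]) (tp : M -> M -> M -> M).
Hypothesis tp_linl :
  forall (s : R[i]) x x' y z, tp (s *: x + x') y z = s *: tp x y z + tp x' y z.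
Hypothesis tp_sym : forall x y z, tp x y z = tp z y x.
Hypothesis tp_conjm :
  forall (s : R[i]) x y y' z, tp x (s *: y + y') z = s^* *: tp x y z + tp x y' z.

Lemma tpDl x x' y z : tp (x + x') y z = tp x y z + tp x' y z.
Proof. by rewrite -[x]scale1r tp_linl !scale1r. Qed.

Lemma tp0l y z : tp 0 y z = 0.
Proof. by apply/eqP; rewrite -[X in X == _](addrK (tp 0 y z)) -tpDl addr0 subrr. Qed.

Lemma tpZl s x y z : tp (s *: x) y z = s *: tp x y z.
Proof. by rewrite -[s *: x]addr0 tp_linl tp0l addr0. Qed.

Lemma tpNl x y z : tp (- x) y z = - tp x y z.
Proof. by rewrite -scaleN1r tpZl scaleN1r. Qed.

Lemma tpDr x y z z' : tp x y (z + z') = tp x y z + tp x y z'.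
Proof. by rewrite tp_sym tpDl !(tp_sym _ _ x). Qed.

Lemma tp0r x y : tp x y 0 = 0.
Proof. by rewrite tp_sym tp0l. Qed.

Lemma tpZr s x y z : tp x y (s *: z) = s *: tp x y z.
Proof. by rewrite tp_sym tpZl tp_sym. Qed.

Lemma tpNr x y z : tp x y (- z) = - tp x y z.
Proof. by rewrite tp_sym tpNl tp_sym. Qed.

Lemma tpDm x y y' z : tp x (y + y') z = tp x y z + tp x y' z.
Proof. by rewrite -[y]scale1r tp_conjm (conjc1 _ : (1 : R[i])^* = 1) !scale1r. Qed.

Lemma tp0m x z : tp x 0 z = 0.
Proof. by apply/eqP; rewrite -[X in X == _](addrK (tp x 0 z)) -tpDm addr0 subrr. Qed.

Lemma tpNm x y z : tp x (- y) z = - tp x y z.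
Proof. by apply/eqP; rewrite -subr_eq0 opprK -tpDm addNr tp0m. Qed.

Lemma tpZm_real x (r : R) y z : tp x ((r%:C)%C *: y) z = (r%:C)%C *: tp x y z.
Proof. by rewrite -[_ *: y]addr0 tp_conjm tp0m addr0 (conjc_real r : ((r%:C)%C)^* = _). Qed.

Lemma tp_suml I (r : seq I) (P : pred I) F y z :
  tp (\sum_(i <- r | P i) F i) y z = \sum_(i <- r | P i) tp (F i) y z.
Proof. exact: (big_morph (fun x => tp x y z) (fun a b => tpDl a b y z) (tp0l y z)). Qed.

Lemma tp_summ I (r : seq I) (P : pred I) F x z :
  tp x (\sum_(i <- r | P i) F i) z = \sum_(i <- r | P i) tp x (F i) z.
Proof. exact: (big_morph (fun y => tp x y z) (fun a b => tpDm x a b z) (tp0m x z)). Qed.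

Hypothesis jordan : forall a b x y w,
  tp a b (tp x y w) = tp x y (tp a b w) + tp (tp a b x) y w - tp x (tp b a y) w.

Lemma tripotentD x y : triple_orth tp x y -> triple_orth tp y x ->
  tripotent tp x -> tripotent tp y -> tripotent tp (x + y).
Proof.
rewrite /triple_orth /tripotent => oxy oyx tx ty.
rewrite !tpDl !tpDm !oxy !oyx !addr0 !add0r !tpDr (tp_sym x x y) (tp_sym y y x).
by rewrite oxy oyx tx ty addr0 add0r.
Qed.

Section OrthogonalPair.
(* Peirce relations for a pair of orthogonal tripotents e, f: the images of
   Q(e), Q(f) and of {e, ., f} live in mutually annihilating Peirce spaces. *)
Variables e f : M.
Hypothesis orth_ef : forall x, tp e f x = 0.
Hypothesis orth_fe : forall x, tp f e x = 0.
Hypothesis trip_f : tp f f f = f.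

Lemma orth_ef_r x : tp x f e = 0. Proof. by rewrite tp_sym orth_ef. Qed.
Lemma orth_fe_r x : tp x e f = 0. Proof. by rewrite tp_sym orth_fe. Qed.

Lemma tp_e_Qe_f y : tp e (tp e y e) f = 0.
Proof.
have := jordan y e e e f.
rewrite (tp_sym e e f) orth_fe tp0r orth_fe_r tp0r orth_fe_r add0r sub0r.
by move/eqP; rewrite eq_sym oppr_eq0 => /eqP.
Qed.

Lemma Qf_Qe y : tp f (tp e y e) f = 0.
Proof.
have := jordan y e f e f.
rewrite !orth_fe_r !orth_fe ?tp0r ?tp0l add0r sub0r.
by move/eqP; rewrite eq_sym oppr_eq0 => /eqP.
Qed.

Lemma Qe_mixed y : tp e (tp e y f) e = 0.
Proof.
have := jordan y e e f e.
rewrite orth_ef tp0r orth_ef orth_ef_r add0r sub0r.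
by move/eqP; rewrite eq_sym oppr_eq0 => /eqP.
Qed.

Lemma Qf_mixed y : tp f (tp e y f) f = 0.
Proof.
have := jordan y e f f f.
rewrite trip_f orth_fe_r tp0r tp0l add0r sub0r.
by move/eqP; rewrite eq_sym oppr_eq0 => /eqP.
Qed.

Lemma mixed_mixed y : tp e (tp e y f) f = tp f f (tp e e y).
Proof.
have := jordan y e e f f.
rewrite orth_ef tp0r orth_ef add0r => /eqP; rewrite eq_sym subr_eq add0r => /eqP <-.
by rewrite tp_sym (tp_sym y).
Qed.

Lemma Lee_Lff_comm w : tp e e (tp f f w) = tp f f (tp e e w).
Proof. by rewrite jordan (tp_sym e e f) orth_fe tp0l tp0m addr0 subr0. Qed.

(* If a, b satisfy the relations that T(e), T(f) inherit from the derivation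
   identity at (e,f), the mixed Peirce term of a is recovered from b. *)
Lemma mixed_from_derivation a b :
  (forall c, tp a f c = - tp e b c) -> tp b e e = - tp f a e ->
  (tp f f (tp e e b)) *+ 2 = - tp e a f.
Proof.
move=> rel_af rel_be.
have Lee_b : tp e e b = - tp e a f by rewrite tp_sym rel_be tp_sym.
have Lff_a : tp f f a = - tp e b f by rewrite tp_sym rel_af.
have Lff_mixed : tp f f (tp e a f) = tp e a f - tp e (tp f f a) f.
  by rewrite jordan trip_f (tp_sym f f e) orth_ef tp0l addr0.
have : tp f f (tp e e b) = - tp e a f - tp f f (tp e e b).
  by rewrite {1}Lee_b tpNr Lff_mixed Lff_a tpNm mixed_mixed opprB addrC.
move=> h; apply/eqP; rewrite mulr2n -subr_eq0 opprK {1}h.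
by rewrite subrK addNr.
Qed.

End OrthogonalPair.

Section DerivableMap.
Variable T : M -> M.
Hypothesis T_additive : forall x y, T (x + y) = T x + T y.
Hypothesis T_deriv : triple_derivable_at_orth tp T.

Lemma deriv_orth_Q e f : triple_orth tp e f -> tp e (T f) e = 0.
Proof.
move=> oef; have := T_deriv e oef.
by rewrite oef addr0 (tp_sym (T e) f e) oef add0r.
Qed.

Lemma deriv_orth_swap e f c : triple_orth tp e f -> tp (T e) f c = - tp e (T f) c.
Proof.
by move=> oef; have := T_deriv c oef; rewrite oef addr0 => /eqP; rewrite addr_eq0 => /eqP.
Qed.

Lemma Q_add e f y : tp (e + f) y (e + f) = tp e y e + tp f y f + (tp e y f) *+ 2.
Proof. by rewrite tpDl !tpDr (tp_sym f y e) mulr2n [tp e y f + _]addrC addrACA. Qed.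

Lemma xi_orth_add e f : triple_orth tp e f -> triple_orth tp f e ->
  tripotent tp e -> tripotent tp f -> xi tp T (e + f) = xi tp T e + xi tp T f.
Proof.
move=> oef ofe te tf; rewrite /xi /P2 /Qop -scalerDr; congr (_ *: _).
rewrite T_additive; set a := T e; set b := T f.
have [A defA] : exists A, A = a + b by eexists.
rewrite -defA.
have QA : tp (e + f) A (e + f) = tp e a e + tp f b f + (tp e A f) *+ 2.
  rewrite Q_add defA !tpDm (deriv_orth_Q oef) (deriv_orth_Q ofe).
  by rewrite addr0 add0r.
have P2A : tp (e + f) (tp (e + f) A (e + f)) (e + f)
    = tp e (tp e a e) e + tp f (tp f b f) f + (tp e (tp e A f) f) *+ 4.
  rewrite QA Q_add !tpDm !(Qf_Qe ofe, Qf_Qe oef, Qe_mixed oef, Qf_mixed ofe tf).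
  rewrite (tp_sym e (tp f _ f)) !(tp_e_Qe_f ofe, tp_e_Qe_f oef) !addr0 !add0r.
  by rewrite -!mulr2n -mulrnA.
have mixed2 : (tp e (tp e A f) f) *+ 2 = - tp e A f.
  rewrite mixed_mixed // defA !tpDr mulrnDl -Lee_Lff_comm //.
  rewrite (mixed_from_derivation ofe te (fun c => deriv_orth_swap c ofe)) ?deriv_orth_swap //.
  rewrite (mixed_from_derivation oef tf (fun c => deriv_orth_swap c oef)) ?deriv_orth_swap //.
  by rewrite (tp_sym f b e) tpDm opprD addrC.
have cancel_mixed : (tp e (tp e A f) f) *+ 4 + (tp e A f) *+ 2 = 0.
  by rewrite (_ : 4 = 2 * 2)%N // mulrnA mixed2 -mulrnDl addNr mul0rn.
by rewrite P2A QA addrACA [X in X + _ = _]addrACA cancel_mixed addr0.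
Qed.

Section OrthogonalFamily.
Variables (m : nat) (e : 'I_m -> M).
Hypothesis e_trip : forall j, tripotent tp (e j).
Hypothesis e_orth : forall j j', j != j' -> triple_orth tp (e j) (e j').

Lemma xi0 : xi tp T 0 = 0.
Proof. by rewrite /xi /P2 /Qop !tp0l addr0 scaler0. Qed.

Lemma orth_sum_family (r : seq 'I_m) k : k \notin r ->
  triple_orth tp (e k) (\sum_(j <- r) e j) /\ triple_orth tp (\sum_(j <- r) e j) (e k).
Proof.
move=> kr; have ne_k j : j \in r -> k != j by move=> jr; apply: contraNneq kr => ->.
split=> x; rewrite ?tp_summ ?tp_suml; apply: big1_seq => j /andP[_ /ne_k kj].
  exact: e_orth.
by apply: e_orth; rewrite eq_sym.
Qed.

Lemma xi_sum_seq (r : seq 'I_m) : uniq r ->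
  tripotent tp (\sum_(j <- r) e j) /\
  xi tp T (\sum_(j <- r) e j) = \sum_(j <- r) xi tp T (e j).
Proof.
elim: r => [|j r IH] /=; first by rewrite !big_nil /tripotent tp0l xi0.
move=> /andP[jr ur]; have [trip_r xi_r] := IH ur.
have [oj or] := orth_sum_family jr.
by rewrite !big_cons xi_orth_add ?xi_r //; split=> //; apply: tripotentD.
Qed.

Lemma xi_sum_family (P : pred 'I_m) :
  xi tp T (\sum_(j | P j) e j) = \sum_(j | P j) xi tp T (e j).
Proof.
rewrite -big_filter -[RHS]big_filter.
exact: (xi_sum_seq (filter_uniq _ (index_enum_uniq _))).2.
Qed.

End OrthogonalFamily.
End DerivableMap.

Lemma Laa_eigen m (e : 'I_m -> M) (c : 'I_m -> R) k :
  (forall j, tripotent tp (e j)) ->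
  (forall j j', j != j' -> triple_orth tp (e j) (e j')) ->
  tp (\sum_j (c j)%:C%C *: e j) (\sum_j (c j)%:C%C *: e j) (e k)
    = ((c k) ^+ 2)%:C%C *: e k.
Proof.
move=> e_trip e_orth; set a := \sum_j _.
have tp_k_a j : tp (e k) a (e j) = if j == k then (c k)%:C%C *: e k else 0.
  rewrite /a tp_summ (bigD1 k) //= big1 => [|i ik]; last first.
    by rewrite tpZm_real e_orth ?scaler0 // eq_sym.
  rewrite addr0 tpZm_real; case: eqP => [->|/eqP jk]; first by rewrite e_trip.
  by rewrite tp_sym e_orth ?scaler0.
rewrite tp_suml (bigD1 k) //= big1 => [|j jk]; last first.
  by rewrite tpZl tp_sym tp_k_a (negbTE jk) scaler0.
by rewrite addr0 tpZl tp_k_a eqxx scalerA -rmorphM expr2.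
Qed.

End TripleProduct.

Section LagrangeInterpolation.
(* For a linear operator L, lagrange L s l is the operator
   \prod_(t in l) (L - t^2) / (s^2 - t^2); it fixes the eigenvectors of
   eigenvalue s^2 and kills those of eigenvalue t^2 for t in l. *)
Variables (R : realType) (V : lmodType R[i]) (L : V -> V).
Hypothesis L_additive : forall x y, L (x + y) = L x + L y.
Hypothesis L_scalable : forall (k : R[i]) x, L (k *: x) = k *: L x.

Definition lagrange (s : R) (l : seq R) (x : V) : V :=
  foldr (fun t y => ((s ^+ 2 - t ^+ 2)^-1)%:C%C *: (L y - (t ^+ 2)%:C%C *: y)) x l.

Lemma lagrangeD s l x y : lagrange s l (x + y) = lagrange s l x + lagrange s l y.
Proof.
elim: l => //= t l IH; rewrite IH L_additive -scalerDr; congr (_ *: _).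
by rewrite scalerDr opprD addrACA.
Qed.

Lemma lagrangeZ s l (k : R[i]) x : lagrange s l (k *: x) = k *: lagrange s l x.
Proof.
elim: l => //= t l IH.
rewrite IH L_scalable [_ *: (k *: _)]scalerA [_ * k]mulrC -scalerA -scalerBr.
by rewrite !scalerA mulrC.
Qed.

Lemma lagrange_sum s l I (r : seq I) (P : pred I) (F : I -> V) :
  lagrange s l (\sum_(i <- r | P i) F i) = \sum_(i <- r | P i) lagrange s l (F i).
Proof.
have lagrange0 : lagrange s l 0 = 0 by have := lagrangeZ s l 0 0; rewrite !scale0r.
exact: (big_morph (lagrange s l) (lagrangeD s l) lagrange0).
Qed.

Lemma lagrange_eigen s l x (c : R) : L x = (c ^+ 2)%:C%C *: x ->
  lagrange s l x = (\prod_(t <- l) ((s ^+ 2 - t ^+ 2)^-1 * (c ^+ 2 - t ^+ 2)))%:C%C *: x.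
Proof.
move=> Lx; elim: l => [|t l IH] /=; first by rewrite big_nil scale1r.
rewrite IH L_scalable Lx big_cons !scalerA -!rmorphM -scalerBl -rmorphB scalerA.
rewrite -rmorphM; congr ((_ : R)%:C%C *: _).
by rewrite -mulrA; congr (_ * _); rewrite [t ^+ 2 * _]mulrC -mulrBr mulrC.
Qed.

Lemma lagrange_select (S : seq R) s x (c : R) : L x = (c ^+ 2)%:C%C *: x ->
  (forall t, t \in S -> 0 < t) -> c \in S -> 0 < s ->
  lagrange s [seq t <- S | t != s] x = if c == s then x else 0.
Proof.
move=> Lx S_pos cS s_pos; rewrite (lagrange_eigen s _ Lx).
case: eqP => [->|/eqP cs].
  rewrite big_seq big1 ?scale1r // => t; rewrite mem_filter => /andP[ts tS].
  rewrite mulVf // subr_eq0; apply: contra ts => /eqP s2t2.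
  by rewrite -(@eqrXn2 _ 2 t s (ltn0Sn 1) (ltW (S_pos t tS)) (ltW s_pos)) s2t2.
rewrite (big_rem c) /=; last by rewrite mem_filter cs.
by rewrite subrr mulr0 mul0r scale0r.
Qed.

End LagrangeInterpolation.

Lemma sum_by_coef (R : realType) (V : lmodType R[i]) m (c : 'I_m -> R)
    (x : 'I_m -> V) (S : seq R) : uniq S -> (forall j, c j \in S) ->
  \sum_j (c j)%:C%C *: x j = \sum_(s <- S) (s%:C)%C *: \sum_(j | c j == s) x j.
Proof.
move=> uS cS; symmetry.
under eq_bigr => s _ do rewrite scaler_sumr big_mkcond.
rewrite exchange_big /=; apply: eq_bigr => j _.
rewrite (big_rem (c j)) ?cS //= eqxx big1_seq ?addr0 // => s /andP[_ sr].
by case: eqP => // cjs; move: sr; rewrite -cjs mem_rem_uniqF.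
Qed.

Lemma sum_coef_eq (R : realType) (V : lmodType R[i]) m (c : 'I_m -> R)
    (x : 'I_m -> V) s :
  \sum_j (c j)%:C%C *: (if c j == s then x j else 0)
    = (s%:C)%C *: \sum_(j | c j == s) x j.
Proof.
rewrite scaler_sumr [RHS]big_mkcond; apply: eq_bigr => j _.
by case: eqP => [->|]; rewrite ?scaler0.
Qed.

Lemma spectral_component_eq (R : realType) (M : completeNormedModType R[i])
    (tp : M -> M -> M -> M) m1 m2 (e : 'I_m1 -> M) (v : 'I_m2 -> M)
    (lam : 'I_m1 -> R) (mu : 'I_m2 -> R) (s : R) :
  is_JB_triple tp ->
  (forall j, tripotent tp (e j)) ->
  (forall j j', j != j' -> triple_orth tp (e j) (e j')) ->
  (forall k, tripotent tp (v k)) ->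
  (forall k k', k != k' -> triple_orth tp (v k) (v k')) ->
  (forall j, 0 < lam j) -> (forall k, 0 < mu k) ->
  \sum_j (lam j)%:C%C *: e j = \sum_k (mu k)%:C%C *: v k ->
  \sum_(j | lam j == s) e j = \sum_(k | mu k == s) v k.
Proof.
move=> [tp_linl tp_sym tp_conjm _ _] e_trip e_orth v_trip v_orth lam_pos mu_pos sum_eq.
have [s_pos|s_le0] := ltP 0 s; last first.
  by rewrite !big_pred0 // => i; apply: contraTF s_le0 => /eqP <-; rewrite -ltNge.
pose S := [seq lam j | j <- enum 'I_m1] ++ [seq mu k | k <- enum 'I_m2].
have S_pos t : t \in S -> 0 < t by rewrite mem_cat => /orP[] /mapP[i _ ->].
have lamS j : lam j \in S by rewrite mem_cat map_f ?mem_enum.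
have muS k : mu k \in S by rewrite mem_cat orbC map_f ?mem_enum.
pose a := \sum_j (lam j)%:C%C *: e j; pose L := tp a a.
have L_additive x y : L (x + y) = L x + L y by rewrite /L tpDr.
have L_scalable (k : R[i]) x : L (k *: x) = k *: L x by rewrite /L tpZr.
have L_e j : L (e j) = ((lam j) ^+ 2)%:C%C *: e j.
  exact: (Laa_eigen tp_linl tp_sym tp_conjm).
have select_e j := lagrange_select L_scalable (L_e j) S_pos (lamS j) s_pos.
have L_v k : L (v k) = ((mu k) ^+ 2)%:C%C *: v k.
  by rewrite /L /a sum_eq (Laa_eigen tp_linl tp_sym tp_conjm).
have select_v k := lagrange_select L_scalable (L_v k) S_pos (muS k) s_pos.
have := congr1 (lagrange L s [seq t <- S | t != s]) sum_eq.
rewrite !lagrange_sum //.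
under eq_bigr do rewrite lagrangeZ // select_e.
under [RHS]eq_bigr do rewrite lagrangeZ // select_v.
rewrite !sum_coef_eq => /scalerI; apply.
by rewrite eq_complex /= negb_and gt_eqF.
Qed.

Unset Implicit Arguments.
Set Strict Implicit.

Theorem mainTheorem13 (R : realType) (M : completeNormedModType R[i])
    (tp : M -> M -> M -> M) (T : M -> M)
    (m1 m2 : nat) (e : 'I_m1 -> M) (v : 'I_m2 -> M)
    (lam : 'I_m1 -> R) (mu : 'I_m2 -> R) :
  is_JBW_triple tp ->
  bounded_op T ->
  triple_derivable_at_orth tp T ->
  (forall j, tripotent tp (e j)) ->
  (forall j j', j != j' -> triple_orth tp (e j) (e j')) ->
  (forall k, tripotent tp (v k)) ->
  (forall k k', k != k' -> triple_orth tp (v k) (v k')) ->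
  (forall j, 0 < lam j) ->
  (forall k, 0 < mu k) ->
  \sum_(j < m1) ((lam j)%:C)%C *: e j = \sum_(k < m2) ((mu k)%:C)%C *: v k ->
  \sum_(j < m1) ((lam j)%:C)%C *: xi tp T (e j)
    = \sum_(k < m2) ((mu k)%:C)%C *: xi tp T (v k).
Proof.
move=> [JB _] [T_lin _] T_deriv e_trip e_orth v_trip v_orth lam_pos mu_pos sum_eq.
have [tp_linl tp_sym tp_conjm _ [jordan _ _ _]] := JB.
have T_additive x y : T (x + y) = T x + T y by have := T_lin 1 x y; rewrite !scale1r.
pose S := undup ([seq lam j | j <- enum 'I_m1] ++ [seq mu k | k <- enum 'I_m2]).
have lamS j : lam j \in S by rewrite mem_undup mem_cat map_f ?mem_enum.
have muS k : mu k \in S by rewrite mem_undup mem_cat orbC map_f ?mem_enum.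
rewrite (sum_by_coef _ (undup_uniq _) lamS) (sum_by_coef _ (undup_uniq _) muS).
apply: eq_bigr => s _; congr (_ *: _).
rewrite -!(xi_sum_family tp_linl tp_sym tp_conjm jordan T_additive T_deriv) //.
by rewrite (spectral_component_eq s JB e_trip e_orth v_trip v_orth lam_pos mu_pos sum_eq).
Qed.
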